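(* Let $\Gamma$ be an art gallery. Suppose there exists a set $S$ of points on the walls of $\Gamma$ such that the view of each point of $S$ is convex and the union of the views of the points of $S$ equals $\Gamma$. Then $\Gamma$ is normal.
   Context: An art gallery $\Gamma$ is a simple polygon in the plane (closed region: boundary together with interior), whose boundary (the walls) consists of finitely many line segments. A guard is a point of $\Gamma$; a guard $G$ visually covers $A\in\Gamma$ if the segment $GA$ lies entirely in $\Gamma$. A configuration of guards is a set $F$ of points of $\Gamma$; it visually covers $X\subseteq\Gamma$ if each point of $X$ is visually covered by some guard in $F$. $\Gamma$ is normal if every configuration of guards visually covering the walls visually covers all of $\Gamma$. The view of a point $A\in\Gamma$ is the set of points $X\in\Gamma$ with segment $AX\subseteq\Gamma$. *)

From Stdlib Require Import Reals List Arith.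
Import ListNotations.
Open Scope R_scope.

Definition pt : Type := (R * R)%type.

Definition seg_pt (A B : pt) (t : R) : pt :=
  ((1 - t) * fst A + t * fst B, (1 - t) * snd A + t * snd B).

Definition on_seg (A B X : pt) : Prop :=
  exists t, 0 <= t <= 1 /\ X = seg_pt A B t.

Definition dist (X Y : pt) : R :=
  sqrt ((fst X - fst Y) ^ 2 + (snd X - snd Y) ^ 2).

Definition norm (X : pt) : R := sqrt (fst X ^ 2 + snd X ^ 2).

(* A polygon is given by its cyclic list of vertices v_0, ..., v_{n-1};
   wall i is the segment [v_i, v_{(i+1) mod n}]. *)
Definition vtx (P : list pt) (i : nat) : pt := nth i P (0, 0).

Definition on_edge (P : list pt) (i : nat) (X : pt) : Prop :=
  on_seg (vtx P i) (vtx P (S i mod length P)) X.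

Definition on_walls (P : list pt) (X : pt) : Prop :=
  exists i, (i < length P)%nat /\ on_edge P i X.

Definition simple_polygon (P : list pt) : Prop :=
  (3 <= length P)%nat /\
  (forall i, (i < length P)%nat -> vtx P i <> vtx P (S i mod length P)) /\
  (forall i j X, (i < length P)%nat -> (j < length P)%nat -> i <> j ->
     on_edge P i X -> on_edge P j X ->
     (j = S i mod length P /\ X = vtx P j) \/
     (i = S j mod length P /\ X = vtx P i)).

Definition path_continuous (p : R -> pt) : Prop :=
  forall t, 0 <= t <= 1 -> forall eps, 0 < eps ->
    exists delta, 0 < delta /\
      forall s, 0 <= s <= 1 -> Rabs (s - t) < delta -> dist (p s) (p t) < eps.

(* X lies in the unbounded component of the complement of the walls:
   it can be joined, avoiding the walls, to points arbitrarily far away. *)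
Definition escapes (P : list pt) (X : pt) : Prop :=
  forall M : R, exists p : R -> pt,
    path_continuous p /\ p 0 = X /\
    (forall t, 0 <= t <= 1 -> ~ on_walls P (p t)) /\
    M < norm (p 1).

(* The art gallery Gamma: the closed region bounded by the polygon
   (walls together with the bounded interior). *)
Definition in_gallery (P : list pt) (X : pt) : Prop := ~ escapes P X.

Definition covers (P : list pt) (G A : pt) : Prop :=
  forall X, on_seg G A X -> in_gallery P X.

Definition view (P : list pt) (A X : pt) : Prop :=
  in_gallery P X /\ covers P A X.

Definition convex (C : pt -> Prop) : Prop :=
  forall X Y Z, C X -> C Y -> on_seg X Y Z -> C Z.

Definition config_covers (P : list pt) (F Xs : pt -> Prop) : Prop :=
  forall A, Xs A -> exists G, F G /\ covers P G A.

Definition normal (P : list pt) : Prop :=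
  forall F : pt -> Prop, (forall G, F G -> in_gallery P G) ->
    config_covers P F (on_walls P) -> config_covers P F (in_gallery P).

From Stdlib Require Import Reals Lra.

Lemma on_seg_sym (A B X : pt) : on_seg A B X -> on_seg B A X.
Proof.
  intros [t [Ht ->]]. exists (1 - t). split; [lra|].
  unfold seg_pt. f_equal; ring.
Qed.

Lemma covers_in_view (P : list pt) (G s : pt) :
  in_gallery P G -> covers P G s -> view P s G.
Proof.
  intros HG Hcov. split; [exact HG|].
  intros X HX. apply Hcov, on_seg_sym, HX.
Qed.

Lemma convex_view_covers (P : list pt) (s G A : pt) :
  convex (view P s) -> view P s G -> view P s A -> covers P G A.
Proof.
  intros Hconv HG HA X HX. exact (proj1 (Hconv G A X HG HA HX)).
Qed.

Theorem mainTheorem7 (P : list pt) (HP : simple_polygon P)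
  (S : pt -> Prop)
  (HSwalls : forall s, S s -> on_walls P s)
  (HSconv : forall s, S s -> convex (view P s))
  (HSunion : forall X, in_gallery P X <-> exists s, S s /\ view P s X) :
  normal P.
Proof.
  intros F HF Hwalls A HA.
  destruct (proj1 (HSunion A) HA) as [s [Hs HsA]].
  destruct (Hwalls s (HSwalls s Hs)) as [G [HFG HGs]].
  exists G. split; [exact HFG|].
  apply (convex_view_covers P s); [exact (HSconv s Hs) | | exact HsA].
  exact (covers_in_view P G s (HF G HFG) HGs).
Qed.
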